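(* Let $G$ be a finitely generated group and $\Omega\le\Lambda\le\operatorname{Aut}(G)$ with $\Omega$ of finite index in $\Lambda$. Then $\alpha_{G^\Omega}\sim\alpha_{G^\Lambda}$.
   Context: Fix a finite generating set $\Sigma$ of $G$. For $\Omega\le\operatorname{Aut}(G)$, the $\Omega$-automorphic growth function sends $n$ to the number of $\Omega$-orbits of $G$ containing an element of word length at most $n$ with respect to $\Sigma$; $\alpha_{G^\Omega}$ is its $\sim$-class. For non-decreasing non-zero $f,g\colon\mathbb{N}\to\mathbb{N}$, $f\preccurlyeq g$ means there is $\lambda\in\mathbb{N}\setminus\{0\}$ with $f(n)\le\lambda g(\lambda n+\lambda)+\lambda$ for all $n$, and $f\sim g$ means $f\preccurlyeq g$ and $g\preccurlyeq f$. *)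

From mathcomp Require Import all_boot all_classical.
From mathcomp Require Import finmap.
From Stdlib Require List.
Set Implicit Arguments. Unset Strict Implicit. Unset Printing Implicit Defensive.

Record group (G : Type) := Group {
  gmul : G -> G -> G;
  gone : G;
  ginv : G -> G;
  gmulA : forall x y z, gmul x (gmul y z) = gmul (gmul x y) z;
  gmul1g : forall x, gmul gone x = x;
  gmulg1 : forall x, gmul x gone = x;
  gmulVg : forall x, gmul (ginv x) x = gone;
  gmulgV : forall x, gmul x (ginv x) = gone }.

Section GrowthDefs.
Variables (G : Type) (grp : group G).
Local Open Scope classical_set_scope.

Definition ball (S : seq G) (n : nat) : set G :=
  [set g | exists w : seq G,
      (size w <= n)%N /\
      (forall s, List.In s w -> List.In s S \/ List.In (ginv grp s) S) /\
      g = foldr (gmul grp) (gone grp) w].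

Definition generates (S : seq G) : Prop := forall g : G, exists n, ball S n g.

Definition is_aut (f : G -> G) : Prop :=
  bijective f /\ forall x y, f (gmul grp x y) = gmul grp (f x) (f y).

Definition aut_subgroup (Om : set (G -> G)) : Prop :=
  [/\ (forall f, Om f -> is_aut f),
      Om (fun x => x),
      (forall f g, Om f -> Om g -> Om (f \o g)) &
      (forall f, Om f -> exists2 g, Om g & cancel f g /\ cancel g f)].

Definition finite_index (Om La : set (G -> G)) : Prop :=
  exists reps : seq (G -> G),
    (forall r, List.In r reps -> La r) /\
    (forall l, La l -> exists r, List.In r reps /\
                        exists2 w, Om w & l = r \o w).

Definition orbit (Om : set (G -> G)) (g : G) : set G := [set f g | f in Om].

Definition aut_growth (Om : set (G -> G)) (S : seq G) (n : nat) : nat :=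
  #|` fset_set [set orbit Om g | g in ball S n] |%fset.

End GrowthDefs.

Definition preceq (f g : nat -> nat) : Prop :=
  exists lam : nat, (0 < lam)%N /\
    forall n, (f n <= lam * g (lam * n + lam) + lam)%N.

Definition gsim (f g : nat -> nat) : Prop := preceq f g /\ preceq g f.

From Pilot Require Import Defs.
From mathcomp Require Import all_boot all_classical.
From mathcomp Require Import finmap.
From Stdlib Require List.
Set Implicit Arguments. Unset Strict Implicit. Unset Printing Implicit Defensive.
Local Open Scope classical_set_scope.

(* As Om <= La, every La-orbit is a union of Om-orbits, so at most as many
   La-orbits as Om-orbits meet the n-ball.  Conversely, write La as a finite union of
   right cosets Om r, r in R; then the La-orbit of h is the union of the
   Om-orbits of the points r h, so every La-orbit contains at most |R|
   Om-orbits and alpha_Om(n) <= |R| alpha_La(n). *)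

Lemma finite_set_In (T : Type) (s : seq T) : finite_set [set x | List.In x s].
Proof.
elim: s => [|a s IH]; first by apply: sub_finite_set (@finite_set0 T) => x [].
have : finite_set ([set a] `|` [set x | List.In x s]).
  by rewrite finite_setU; split=> //; exact: finite_set1.
by apply: sub_finite_set => x [<-|sx]; [left|right].
Qed.

Lemma In_map (T U : Type) (f : T -> U) (s : seq T) x :
  List.In x s -> List.In (f x) (map f s).
Proof. by elim: s => //= y s IH [->|/IH]; [left|right]. Qed.

Section FsetSetCard.
Variable T : choiceType.

Lemma card_fset_set_le (A B : set T) : finite_set B -> A `<=` B ->
  (#|` fset_set A| <= #|` fset_set B|)%N.
Proof.
move=> fB AB; apply: fsubset_leq_card.
by rewrite -fset_set_sub //; exact: sub_finite_set fB.
Qed.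

Lemma card_fset_set_image (U : choiceType) (f : T -> U) (A : set T) :
  finite_set A -> (#|` fset_set (f @` A)| <= #|` fset_set A|)%N.
Proof. by move=> fA; rewrite fset_set_image //; exact: leq_imfset_card. Qed.

Lemma card_fset_set_In (s : seq T) :
  (#|` fset_set [set x | List.In x s]| <= size s)%N.
Proof.
elim: s => [|a s IH]; first by rewrite (_ : [set x | _] = set0) ?fset_set0.
have -> : [set x | List.In x (a :: s)] = [set a] `|` [set x | List.In x s].
  by apply/seteqP; split=> x [->|sx]; by [left|right].
rewrite fset_setU ?fset_set1; [|exact: finite_set1|exact: finite_set_In].
by apply: leq_trans (leq_card_fsetU _ _).1 _; rewrite cardfs1 add1n ltnS.
Qed.

Lemma card_fset_set_bigsetU (I : eqType) (s : seq I) (F : I -> set T) k :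
  (forall i, i \in s -> finite_set (F i) /\ (#|` fset_set (F i)| <= k)%N) ->
  finite_set (\big[setU/set0]_(i <- s) F i) /\
  (#|` fset_set (\big[setU/set0]_(i <- s) F i)| <= k * size s)%N.
Proof.
elim: s => [_|i s IH hF].
  by rewrite big_nil fset_set0; split=> //; exact: finite_set0.
have [fFi cFi] := hF i (mem_head _ _).
have [fs cs] : finite_set (\big[setU/set0]_(j <- s) F j) /\
    (#|` fset_set (\big[setU/set0]_(j <- s) F j)| <= k * size s)%N.
  by apply: IH => j js; apply: hF; rewrite inE js orbT.
rewrite big_cons finite_setU fset_setU //; split=> //.
by apply: leq_trans (leq_card_fsetU _ _).1 _; rewrite mulnS leq_add.
Qed.

Lemma card_fset_set_bigcup (I : choiceType) (D : set I) (F : I -> set T) k :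
  finite_set D ->
  (forall i, D i -> finite_set (F i) /\ (#|` fset_set (F i)| <= k)%N) ->
  (#|` fset_set (\bigcup_(i in D) F i)| <= k * #|` fset_set D|)%N.
Proof.
move=> fD hF; rewrite -(bigsetU_fset_set _ fD).
apply: (card_fset_set_bigsetU _).2 => i.
by rewrite in_fset_set // => /set_mem /hF.
Qed.

End FsetSetCard.

Lemma preceq_le_mul (f g : nat -> nat) k : {homo g : m n / (m <= n)%N} ->
  (forall n, f n <= k * g n)%N -> preceq f g.
Proof.
move=> g_mono fg; exists k.+1; split=> // n.
apply: leq_trans (fg n) (leq_trans _ (leq_addr _ _)).
by apply: leq_mul => //; apply: g_mono; rewrite mulSn -addnA leq_addr.
Qed.

Local Notation orbit := Defs.orbit.

Section Growth.
Variables (G : Type) (grp : group G).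
Local Notation ball := (ball grp).

Lemma ginvK : involutive (ginv grp).
Proof.
by move=> x; rewrite -[LHS](gmulg1 grp) -(gmulVg grp x) gmulA gmulVg gmul1g.
Qed.

Definition letters (S : seq G) : set G :=
  [set s | List.In s S \/ List.In (ginv grp s) S].

Lemma finite_letters S : finite_set (letters S).
Proof.
have : finite_set ([set x | List.In x S] `|` ginv grp @` [set x | List.In x S]).
  by rewrite finite_setU; split; [|apply: finite_image]; exact: finite_set_In.
apply: sub_finite_set => s [Ss|Ss]; first by left.
by right; exists (ginv grp s); rewrite ?ginvK.
Qed.

Lemma ball0 S : ball S 0 = [set gone grp].
Proof.
apply/seteqP; split=> g; first by case=> -[|s w] [sz [_ ->]].
by move->; exists [::]; split=> //; split=> // s [].
Qed.

Lemma ballS S n :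
  ball S n.+1 `<=`
    ball S n `|` [set gmul grp s g | s in letters S & g in ball S n].
Proof.
move=> _ [[|s w] [sz [wS ->]]].
  by left; exists [::]; split=> //; split=> // s [].
right; exists s; first by apply: wS; left.
exists (foldr (gmul grp) (gone grp) w) => //.
by exists w; split=> //; split=> // t tw; apply: wS; right.
Qed.

Lemma finite_ball S n : finite_set (ball S n).
Proof.
elim: n => [|n IH]; first by rewrite ball0; exact: finite_set1.
apply: sub_finite_set (@ballS S n) _; rewrite finite_setU; split=> //.
exact: finite_image2 (finite_letters S) IH.
Qed.

Lemma ball_mono S : {homo ball S : m n / (m <= n)%N >-> m `<=` n}.
Proof.
by move=> m n mn g [w [sz wg]]; exists w; split=> //; exact: leq_trans mn.
Qed.

Section Orbit.
Variable Om : set (G -> G).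
Hypothesis OmP : aut_subgroup grp Om.

Lemma orbit_refl g : orbit Om g g.
Proof. by case: OmP => _ Om1 _ _; exists id. Qed.

Lemma orbit_eq x y : orbit Om x y -> orbit Om y = orbit Om x.
Proof.
case: OmP => _ _ OmM OmV [w Ow <-]; apply/seteqP; split=> _ [f Of <-].
  by exists (f \o w) => //; exact: OmM.
have [w' Ow' [ww' _]] := OmV w Ow.
by exists (f \o w'); [exact: OmM | rewrite /= ww'].
Qed.

Lemma aut_subgroup_cancel w v : Om w -> cancel w v -> cancel v w -> Om v.
Proof.
case: OmP => _ _ _ OmV Ow _ vw; have [w' Ow' [ww' _]] := OmV w Ow.
by rewrite (_ : v = w') //; apply: funext => x; rewrite -[in RHS](vw x) ww'.
Qed.

End Orbit.

Lemma finite_orbits_ball Om S n : finite_set [set orbit Om g | g in ball S n].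
Proof. exact/finite_image/finite_ball. Qed.

Lemma aut_growth_mono Om S : {homo aut_growth grp Om S : m n / (m <= n)%N}.
Proof.
move=> m n mn; apply: card_fset_set_le; first exact: finite_orbits_ball.
by move=> _ [g bg <-]; exists g => //; exact: ball_mono bg.
Qed.

Section Subgroup.
Variables Om La : set (G -> G).
Hypotheses (OmP : aut_subgroup grp Om) (LaP : aut_subgroup grp La).
Hypothesis OmLa : Om `<=` La.

Lemma bigcup_orbit_subgroup g :
  \bigcup_(x in orbit Om g) orbit La x = orbit La g.
Proof.
case: LaP => _ _ LaM _; apply/seteqP; split=> [_ [_ [w Ow <-] [l Ll <-]]|y gy].
  by exists (l \o w) => //; apply: LaM => //; exact: OmLa.
by exists g => //; exact: orbit_refl.
Qed.

Lemma aut_growth_le_subgroup S n :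
  (aut_growth grp La S n <= aut_growth grp Om S n)%N.
Proof.
rewrite /aut_growth.
have -> : [set orbit La g | g in ball S n] =
    (fun O => \bigcup_(x in O) orbit La x) @` [set orbit Om g | g in ball S n].
  rewrite image_comp; apply: eq_imagel => g _.
  by rewrite /= bigcup_orbit_subgroup.
exact/card_fset_set_image/finite_orbits_ball.
Qed.

Lemma finite_index_right_cosets : finite_index Om La ->
  exists rs : seq (G -> G), forall l, La l ->
    exists2 r, List.In r rs & exists2 w, Om w & l = w \o r.
Proof.
case=> reps [repsLa left_cosets]; case: LaP => _ _ _ LaV.
have [inverse inverseP] : {inverse : (G -> G) -> G -> G & forall f,
    La f -> La (inverse f) /\ cancel f (inverse f) /\ cancel (inverse f) f}.
  apply: (choice (P := fun f v => La f -> La v /\ cancel f v /\ cancel v f)).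
  move=> f; have [/LaV[v Lv fv]|nLf] := pselect (La f).
    by exists v.
  by exists id.
exists (map inverse reps) => l Ll; have [Lil [lK _]] := inverseP l Ll.
have [r [reps_r [w Ow il_rw]]] := left_cosets _ Lil.
have [_ [rK _]] := inverseP r (repsLa r reps_r).
have [_ [wK Kw]] := inverseP w (OmLa Ow).
exists (inverse r); first exact: In_map.
exists (inverse w); first by apply: (aut_subgroup_cancel OmP Ow wK Kw).
by apply: funext => x /=; rewrite -[in RHS](lK x) il_rw /= rK wK.
Qed.

Section RightCosets.
Variable rs : seq (G -> G).
Hypothesis right_cosets : forall l, La l ->
  exists2 r, List.In r rs & exists2 w, Om w & l = w \o r.

Lemma card_orbits_in_orbit h :
  finite_set [set orbit Om g | g in orbit La h] /\
  (#|` fset_set [set orbit Om g | g in orbit La h]| <= size rs)%N.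
Proof.
have sub : [set orbit Om g | g in orbit La h] `<=`
    [set O | List.In O (map (fun r => orbit Om (r h)) rs)].
  move=> _ [_ [l Ll <-] <-]; have [r rs_r [w Ow ->]] := right_cosets Ll.
  rewrite /= (orbit_eq OmP (_ : orbit Om (r h) _)); last by exists w.
  exact: In_map.
split; first exact: sub_finite_set sub (finite_set_In _).
apply: leq_trans (card_fset_set_le (finite_set_In _) sub) _.
by rewrite -(size_map (fun r => orbit Om (r h))) card_fset_set_In.
Qed.

Lemma aut_growth_le_index S n :
  (aut_growth grp Om S n <= size rs * aut_growth grp La S n)%N.
Proof.
pose orbitsLa := [set orbit La g | g in ball S n].
have cover : [set orbit Om g | g in ball S n] `<=`
    \bigcup_(P in orbitsLa) [set orbit Om g | g in P].
  move=> _ [g bg <-]; exists (orbit La g); first by exists g.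
  by exists g => //; exact: orbit_refl.
apply: leq_trans (card_fset_set_le _ cover) _.
  apply: bigcup_finite; first exact: finite_orbits_ball.
  by move=> _ [h _ <-]; exact: (card_orbits_in_orbit h).1.
apply: card_fset_set_bigcup; first exact: finite_orbits_ball.
by move=> _ [h _ <-]; exact: card_orbits_in_orbit.
Qed.

End RightCosets.
End Subgroup.
End Growth.

Theorem mainTheorem16 (G : Type) (grp : group G) (S : seq G)
  (hS : generates grp S)
  (Om La : (G -> G) -> Prop)
  (hOm : aut_subgroup grp Om) (hLa : aut_subgroup grp La)
  (hsub : forall f, Om f -> La f)
  (hfin : finite_index Om La) :
  gsim (aut_growth grp Om S) (aut_growth grp La S).
Proof.
have [rs right_cosets] := finite_index_right_cosets hOm hLa hsub hfin.
split.
- apply: (@preceq_le_mul _ _ (size rs)); first exact: aut_growth_mono.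
  exact: (aut_growth_le_index hOm hLa right_cosets S).
- apply: (@preceq_le_mul _ _ 1); first exact: aut_growth_mono.
  by move=> n; rewrite mul1n; exact: aut_growth_le_subgroup.
Qed.
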